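(* Let $X$ be an $L$-topological space and $p\in{\rm pt}_L\mathcal O(X)$. If $A$ is a super-compact open set, then ${\rm sub}_{\mathcal O(X)}([A],p)=p(A)$, where $[A]:\mathcal O(X)\to L$ is $[A](B)={\rm sub}_X(A,B)$.
   Context: $L$ is a frame with implication $\to$. ${\rm sub}_X(A,B)=\bigwedge_{x\in X}A(x)\to B(x)$ for $A,B\in L^X$. $L$-topology: $\mathcal O(X)\subseteq L^X$ closed under finite meets and arbitrary joins containing all constants $a_X$. Super-compact: $A\in L^X$ with $\bigvee_xA(x)=1$ and ${\rm sub}_X(A,\bigvee_iV_i)=\bigvee_i{\rm sub}_X(A,V_i)$ for every family of open $V_i$. A point of $\mathcal O(X)$: $p:\mathcal O(X)\to L$ with $p(A\wedge B)=p(A)\wedge p(B)$, $p(\bigvee_iA_i)=\bigvee_ip(A_i)$, $p(\lambda_X)=\lambda$ for $\lambda\in L$; ${\rm pt}_L\mathcal O(X)$ is the set of points; for maps $p,q:\mathcal O(X)\to L$, ${\rm sub}_{\mathcal O(X)}(p,q)=\bigwedge_{B\in\mathcal O(X)}p(B)\to q(B)$. *)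

Record frame := Frame {
  fcar :> Type;
  fle : fcar -> fcar -> Prop;
  fle_refl : forall a, fle a a;
  fle_trans : forall a b c, fle a b -> fle b c -> fle a c;
  fle_antisym : forall a b, fle a b -> fle b a -> a = b;
  fmeet : fcar -> fcar -> fcar;
  fmeet_l : forall a b, fle (fmeet a b) a;
  fmeet_r : forall a b, fle (fmeet a b) b;
  fmeet_glb : forall a b c, fle c a -> fle c b -> fle c (fmeet a b);
  fsup : (fcar -> Prop) -> fcar;
  fsup_ub : forall (S : fcar -> Prop) a, S a -> fle a (fsup S);
  fsup_lub : forall (S : fcar -> Prop) b, (forall a, S a -> fle a b) -> fle (fsup S) b;
  fmeet_sup_distr : forall a (S : fcar -> Prop),
      fmeet a (fsup S) = fsup (fun c => exists s, S s /\ c = fmeet a s);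
  fimp : fcar -> fcar -> fcar;
  fimp_adj : forall a b c, fle (fmeet a b) c <-> fle a (fimp b c)
}.

Arguments fle {_}.
Arguments fmeet {_}.
Arguments fsup {_}.
Arguments fimp {_}.

Section FrameOps.
Variable L : frame.

Definition fjoin {I : Type} (f : I -> L) : L := fsup (fun a => exists i, a = f i).

Definition fmeets {I : Type} (f : I -> L) : L :=
  fsup (fun a => forall i, fle a (f i)).

Definition ftop : L := fsup (fun _ => True).

End FrameOps.

Arguments fjoin {L I}.
Arguments fmeets {L I}.
Arguments ftop {L}.

Definition subX {L : frame} {X : Type} (A B : X -> L) : L :=
  fmeets (fun x : X => fimp (A x) (B x)).

Definition is_Ltopology {L : frame} {X : Type} (O : (X -> L) -> Prop) : Prop :=
  (forall A B, O A -> O B -> O (fun x => fmeet (A x) (B x))) /\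
  (forall (I : Type) (V : I -> X -> L), (forall i, O (V i)) ->
      O (fun x => fjoin (fun i => V i x))) /\
  (forall a : L, O (fun _ : X => a)).

Definition super_compact {L : frame} {X : Type} (O : (X -> L) -> Prop) (A : X -> L) : Prop :=
  fjoin A = ftop /\
  forall (I : Type) (V : I -> X -> L), (forall i, O (V i)) ->
    subX A (fun x => fjoin (fun i => V i x)) = fjoin (fun i => subX A (V i)).

(* A point of O(X): a map O(X) -> L (represented as a total map on L^X, only
   its values on open sets matter) preserving binary meets, arbitrary joins
   and constants. *)
Definition is_point {L : frame} {X : Type} (O : (X -> L) -> Prop) (p : (X -> L) -> L) : Prop :=
  (forall A B, O A -> O B -> p (fun x => fmeet (A x) (B x)) = fmeet (p A) (p B)) /\
  (forall (I : Type) (V : I -> X -> L), (forall i, O (V i)) ->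
      p (fun x => fjoin (fun i => V i x)) = fjoin (fun i => p (V i))) /\
  (forall a : L, p (fun _ : X => a) = a).

Definition subO {L : frame} {X : Type} (O : (X -> L) -> Prop) (p q : (X -> L) -> L) : L :=
  fmeets (fun B : {B : X -> L | O B} => fimp (p (proj1_sig B)) (q (proj1_sig B))).

Definition bracket {L : frame} {X : Type} (A : X -> L) : (X -> L) -> L :=
  fun B => subX A B.

(** Testing [[A]] against [B := A] gives [sub(A,A) -> p(A) = 1 -> p(A) = p(A)],
    so [sub([A],p) <= p(A)].  Conversely, for open [B] the open set
    [A /\ sub_X(A,B)] (a meet with a constant) lies below [B] by modus ponens,
    so applying the point [p] yields [p(A) /\ sub_X(A,B) <= p(B)]. *)

From Stdlib Require Import FunctionalExtensionality.

Section FrameFacts.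
Variable L : frame.

Lemma fmeets_lb {I : Type} (f : I -> L) (i : I) : fle (fmeets f) (f i).
Proof. unfold fmeets. apply fsup_lub. intros a Ha. apply Ha. Qed.

Lemma fmeets_glb {I : Type} (f : I -> L) (c : L) :
  (forall i, fle c (f i)) -> fle c (fmeets f).
Proof. intros H. apply (fsup_ub L (fun a => forall i, fle a (f i))). exact H. Qed.

Lemma fle_top (a : L) : fle a ftop.
Proof. apply (fsup_ub L (fun _ => True)). exact I. Qed.

Lemma fmeetC_le (a b : L) : fle (fmeet a b) (fmeet b a).
Proof. apply fmeet_glb; [apply fmeet_r | apply fmeet_l]. Qed.

Lemma fmeet_fimp_le (a b : L) : fle (fmeet a (fimp a b)) b.
Proof.
  eapply fle_trans; [apply fmeetC_le |].
  apply fimp_adj, fle_refl.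
Qed.

Lemma fimp_top (c : L) : fimp ftop c = c.
Proof.
  apply fle_antisym.
  - eapply fle_trans; [| apply (fmeet_fimp_le ftop c)].
    apply fmeet_glb; [apply fle_top | apply fle_refl].
  - apply fimp_adj, fmeet_l.
Qed.

End FrameFacts.

Section SubX.
Variables (L : frame) (X : Type).

Lemma subX_refl (A : X -> L) : subX A A = ftop.
Proof.
  apply fle_antisym; [apply fle_top |].
  apply fmeets_glb. intro x. apply fimp_adj, fmeet_r.
Qed.

Lemma fmeet_subX_le (A B : X -> L) (x : X) : fle (fmeet (A x) (subX A B)) (B x).
Proof.
  eapply fle_trans; [| apply (fmeet_fimp_le L (A x) (B x))].
  apply fmeet_glb; [apply fmeet_l |].
  eapply fle_trans; [apply fmeet_r | apply (fmeets_lb L (fun x => fimp (A x) (B x)))].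
Qed.

End SubX.

Section Points.
Variables (L : frame) (X : Type) (O : (X -> L) -> Prop) (p : (X -> L) -> L).
Hypothesis (HO : is_Ltopology O) (Hp : is_point O p).

Lemma point_monotone (C B : X -> L) :
  O C -> O B -> (forall x, fle (C x) (B x)) -> fle (p C) (p B).
Proof.
  intros HC HB Hle.
  assert (HCB : C = fun x => fmeet (C x) (B x)).
  { apply functional_extensionality. intro x. apply fle_antisym.
    - apply fmeet_glb; [apply fle_refl | apply Hle].
    - apply fmeet_l. }
  destruct Hp as [Hmeet _].
  rewrite HCB, Hmeet by assumption. apply fmeet_r.
Qed.

Lemma point_meet_const (A : X -> L) (a : L) :
  O A -> p (fun x => fmeet (A x) a) = fmeet (p A) a.
Proof.
  intros HA. destruct HO as [_ [_ HOconst]]. destruct Hp as [Hmeet [_ Hconst]].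
  rewrite (Hmeet A (fun _ => a)) by auto. now rewrite Hconst.
Qed.

Lemma subO_bracket_le (A : X -> L) : O A -> fle (subO O (bracket A) p) (p A).
Proof.
  intros HA.
  eapply fle_trans; [apply (fmeets_lb L _ (exist _ A HA)) |]. cbn.
  unfold bracket. rewrite subX_refl, fimp_top. apply fle_refl.
Qed.

Lemma le_subO_bracket (A : X -> L) : O A -> fle (p A) (subO O (bracket A) p).
Proof.
  intros HA. apply fmeets_glb. intros [B HB]. cbn. unfold bracket.
  apply fimp_adj. rewrite <- point_meet_const by assumption.
  destruct HO as [HOmeet [_ HOconst]].
  apply point_monotone; auto.
  intro x. apply fmeet_subX_le.
Qed.

End Points.

Theorem lemma5p9 (L : frame) (X : Type) (O : (X -> L) -> Prop)
  (HO : is_Ltopology O) (p : (X -> L) -> L) (Hp : is_point O p)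
  (A : X -> L) (HAopen : O A) (HA : super_compact O A) :
  subO O (bracket A) p = p A.
Proof.
  apply fle_antisym.
  - exact (subO_bracket_le L X O p A HAopen).
  - exact (le_subO_bracket L X O p HO Hp A HAopen).
Qed.
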